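(* Let $S$ be a semiring and $M$ a left $S$-semimodule such that every subtractive subsemimodule of $M$ is a direct summand of $M$. Then every left $S$-semimodule is $M$-$e$-projective.
   Context: A semiring $(S,+,0,\cdot,1)$ consists of a commutative monoid $(S,+,0)$ and a monoid $(S,\cdot,1)$ with $0\neq 1$, absorbing zero and both distributive laws; left $S$-semimodules and $S$-linear maps are as for modules without subtraction. A subsemimodule $K\le M$ is subtractive if $m+k=k'$ with $k,k'\in K$ implies $m\in K$. $K$ is a direct summand of $M$ if $M=K\oplus K'$ for some subsemimodule $K'$, meaning every $m\in M$ can be written uniquely as $m=k+k'$ with $k\in K$, $k'\in K'$. For an $S$-linear $h:X\to Y$, $\mathrm{Ker}(h)=\{x\mid h(x)=0\}$; $h$ is $k$-normal if $h(x)=h(x')$ implies $x+k=x'+k'$ for some $k,k'\in\mathrm{Ker}(h)$. A short exact sequence $0\to L\xrightarrow{f}M\xrightarrow{g}N\to0$ (of semimodules or commutative monoids) means: $f$ injective, $f(L)=\mathrm{Ker}(g)$, $g$ surjective and $k$-normal. $P$ is $M$-$e$-projective if for every short exact sequence $0\to L\xrightarrow{f}M\xrightarrow{g}N\to0$ of left $S$-semimodules with middle term $M$, the sequence $0\to\mathrm{Hom}_S(P,L)\xrightarrow{f\circ-}\mathrm{Hom}_S(P,M)\xrightarrow{g\circ-}\mathrm{Hom}_S(P,N)\to0$ is a short exact sequence of commutative monoids (Hom-sets with pointwise addition). *)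

From HB Require Import structures.
From mathcomp Require Import all_boot all_algebra.
Set Implicit Arguments. Unset Strict Implicit. Unset Printing Implicit Defensive.
Import GRing.Theory.
Local Open Scope ring_scope.

Definition is_linear (S : nzSemiRingType) (U V : lSemiModType S) (h : U -> V) : Prop :=
  h 0 = 0 /\ (forall x y, h (x + y) = h x + h y) /\ (forall (a : S) x, h (a *: x) = a *: h x).

Definition subsemimodule (S : nzSemiRingType) (M : lSemiModType S) (K : M -> Prop) : Prop :=
  K 0 /\ (forall x y, K x -> K y -> K (x + y)) /\ (forall (a : S) x, K x -> K (a *: x)).

Definition subtractive (S : nzSemiRingType) (M : lSemiModType S) (K : M -> Prop) : Prop :=
  forall m k k', K k -> K k' -> m + k = k' -> K m.

Definition direct_summand (S : nzSemiRingType) (M : lSemiModType S) (K : M -> Prop) : Prop :=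
  exists K' : M -> Prop, subsemimodule K' /\
    forall m, (exists k k', K k /\ K' k' /\ m = k + k') /\
      (forall k1 k1' k2 k2', K k1 -> K' k1' -> K k2 -> K' k2' ->
         m = k1 + k1' -> m = k2 + k2' -> k1 = k2 /\ k1' = k2').

(* Short exact sequence 0 -> L -f-> M -g-> N -> 0 of commutative monoids whose
   carriers are given as subsets DL, DM, DN of ambient types (this allows
   Hom-sets, i.e. the linear maps among all functions, with pointwise
   operations). addM is the addition of the middle monoid, zN the zero of N. *)
Definition ses_on (L M N : Type) (DL : L -> Prop) (DM : M -> Prop) (DN : N -> Prop)
  (addM : M -> M -> M) (zN : N) (f : L -> M) (g : M -> N) : Prop :=
  (forall x y, DL x -> DL y -> f x = f y -> x = y) /\
  (forall m, DM m -> ((exists l, DL l /\ f l = m) <-> g m = zN)) /\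
  (forall n, DN n -> exists m, DM m /\ g m = n) /\
  (forall m m', DM m -> DM m' -> g m = g m' ->
     exists k k', DM k /\ DM k' /\ g k = zN /\ g k' = zN /\ addM m k = addM m' k').

Definition ses_mod (S : nzSemiRingType) (L M N : lSemiModType S) (f : L -> M) (g : M -> N) : Prop :=
  is_linear f /\ is_linear g /\
  ses_on (fun _ : L => True) (fun _ : M => True) (fun _ : N => True) +%R 0 f g.

Definition e_projective (S : nzSemiRingType) (M P : lSemiModType S) : Prop :=
  forall (L N : lSemiModType S) (f : L -> M) (g : M -> N),
    ses_mod f g ->
    ses_on (fun h : P -> L => is_linear h) (fun h : P -> M => is_linear h)
           (fun h : P -> N => is_linear h)
           (fun h h' : P -> M => fun x => h x + h' x) (fun _ : P => 0 : N)
           (fun h : P -> L => f \o h) (fun h : P -> M => g \o h).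

(* The kernel K of g is subtractive, so by hypothesis M = K (+) K'. Since g is
   k-normal, g is injective on K', and g maps K' onto N; hence any linear
   P -> N lifts pointwise into K' and the lift is automatically linear. The
   projection p onto K along K' is linear, and if g h = g h' then h and h'
   have the same K'-component, so h + p h' = h' + p h. *)

From HB Require Import structures.
From mathcomp Require Import all_boot all_algebra.
From Stdlib Require Import ClassicalEpsilon FunctionalExtensionality.
Set Implicit Arguments. Unset Strict Implicit. Unset Printing Implicit Defensive.
Import GRing.Theory.
Local Open Scope ring_scope.

Definition direct_complement (S : nzSemiRingType) (M : lSemiModType S)
    (K K' : M -> Prop) : Prop :=
  subsemimodule K' /\
  forall m, (exists k k', K k /\ K' k' /\ m = k + k') /\
    (forall k1 k1' k2 k2', K k1 -> K' k1' -> K k2 -> K' k2' ->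
       m = k1 + k1' -> m = k2 + k2' -> k1 = k2 /\ k1' = k2').

Definition k_normal (S : nzSemiRingType) (M N : lSemiModType S) (g : M -> N) : Prop :=
  forall m m', g m = g m' -> exists k k', g k = 0 /\ g k' = 0 /\ m + k = m' + k'.

Lemma is_linear_comp (S : nzSemiRingType) (U V W : lSemiModType S)
    (f : V -> W) (g : U -> V) :
  is_linear f -> is_linear g -> is_linear (f \o g).
Proof.
move=> [f0 [fD fZ]] [g0 [gD gZ]]; split; first by rewrite /= g0 f0.
by split=> [x y | a x] /=; rewrite ?gD ?fD ?gZ ?fZ.
Qed.

Lemma subsemimoduleT (S : nzSemiRingType) (M : lSemiModType S) :
  subsemimodule (fun _ : M => True).
Proof. by do !split. Qed.

Lemma hom_lift_on (S : nzSemiRingType) (P M N : lSemiModType S)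
    (K' : M -> Prop) (g : M -> N) (h : P -> N) :
  subsemimodule K' -> is_linear g ->
  (forall u v, K' u -> K' v -> g u = g v -> u = v) ->
  is_linear h -> (forall x, exists m, K' m /\ g m = h x) ->
  exists l : P -> M, is_linear l /\ g \o l = h.
Proof.
move=> [K'0 [K'D K'Z]] [g0 [gD gZ]] g_inj [h0 [hD hZ]] h_lift.
have [l l_spec] := choice _ h_lift.
have lK' x : K' (l x) by case: (l_spec x).
have gl x : g (l x) = h x by case: (l_spec x).
exists l; split; last by apply: functional_extensionality => x; exact: gl.
split; first by apply: g_inj; rewrite ?gl ?g0 ?h0.
split=> [x y | a x]; apply: g_inj; rewrite ?gD ?gZ ?gl ?hD ?hZ //.
- exact: K'D.
- exact: K'Z.
Qed.

Lemma hom_image_eq_kernel (S : nzSemiRingType) (P L M N : lSemiModType S)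
    (f : L -> M) (g : M -> N) (h : P -> M) :
  is_linear f -> injective f -> (forall m, (exists l, f l = m) <-> g m = 0) ->
  is_linear h ->
  (exists l, is_linear l /\ f \o l = h) <-> g \o h = (fun _ => 0).
Proof.
move=> f_lin f_inj f_im h_lin; split=> [[l [_ <-]] | gh0].
  by apply: functional_extensionality => x /=; apply/f_im; exists (l x).
apply: hom_lift_on (subsemimoduleT L) f_lin _ h_lin _ => [u v _ _ | x].
  exact: f_inj.
have [l fl] := proj2 (f_im (h x)) (equal_f gh0 x).
by exists l.
Qed.

Section Projection.
Variables (S : nzSemiRingType) (M : lSemiModType S) (K K' : M -> Prop).
Hypotheses (K_sub : subsemimodule K) (KK' : direct_complement K K').

Lemma direct_complement_unique k1 k1' k2 k2' :
  K k1 -> K' k1' -> K k2 -> K' k2' -> k1 + k1' = k2 + k2' -> k1 = k2 /\ k1' = k2'.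
Proof.
move=> Kk1 K'k1' Kk2 K'k2' e.
exact: (proj2 (KK'.2 (k1 + k1'))) e.
Qed.

Lemma direct_complement_projection : exists p q : M -> M,
  is_linear p /\ (forall m, K (p m)) /\ (forall m, K' (q m)) /\
  (forall m, p m + q m = m).
Proof.
have [[K0 [KD KZ]] [[K'0 [K'D K'Z]] _]] := (K_sub, KK').
have [pq pq_spec] : exists pq : M -> M * M,
    forall m, K (pq m).1 /\ K' (pq m).2 /\ (pq m).1 + (pq m).2 = m.
  apply: (choice (fun m kk => K kk.1 /\ K' kk.2 /\ kk.1 + kk.2 = m)) => m.
  have [[k [k' [Kk [K'k' ->]]]] _] := KK'.2 m.
  by exists (k, k').
pose p m := (pq m).1; pose q m := (pq m).2.
have pK m : K (p m) by case: (pq_spec m).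
have qK' m : K' (q m) by case: (pq_spec m) => _ [].
have pq_sum m : p m + q m = m by case: (pq_spec m) => _ [].
have p_eq k k' : K k -> K' k' -> p (k + k') = k.
  move=> Kk K'k'.
  by case: (direct_complement_unique (pK _) (qK' _) Kk K'k' (pq_sum _)).
exists p, q; split=> //; split.
  by have := p_eq 0 0 K0 K'0; rewrite addr0.
split=> [x y | a x].
  by rewrite -{1}(pq_sum x) -{1}(pq_sum y) addrACA p_eq //; [apply: KD | apply: K'D].
by rewrite -{1}(pq_sum x) scalerDr p_eq //; [apply: KZ | apply: K'Z].
Qed.

End Projection.

Section KernelComplement.
Variables (S : nzSemiRingType) (M N : lSemiModType S) (g : M -> N).
Hypothesis g_lin : is_linear g.

Lemma kernel_subsemimodule : subsemimodule (fun m => g m = 0).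
Proof.
have [g0 [gD gZ]] := g_lin; split=> //.
by split=> [x y gx gy | a x gx]; rewrite ?gD ?gZ ?gx ?gy ?addr0 ?scaler0.
Qed.

Lemma kernel_subtractive : subtractive (fun m => g m = 0).
Proof. by move=> m k k' gk gk' e; move: gk'; rewrite -e g_lin.2.1 gk addr0. Qed.

Variable K' : M -> Prop.
Hypothesis KK' : direct_complement (fun m => g m = 0) K'.

Lemma k_normal_injective_on_complement :
  k_normal g -> forall u v, K' u -> K' v -> g u = g v -> u = v.
Proof.
move=> g_kn u v K'u K'v /g_kn [k [k' [gk [gk' e]]]].
suff [] : k = k' /\ u = v by [].
by apply: (direct_complement_unique KK') => //; rewrite addrC e addrC.
Qed.

Variables (p q : M -> M).
Hypotheses (p_lin : is_linear p) (p_ker : forall m, g (p m) = 0).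
Hypotheses (qK' : forall m, K' (q m)) (pq_sum : forall m, p m + q m = m).

Lemma g_complement_projection m : g (q m) = g m.
Proof. by rewrite -{2}(pq_sum m) g_lin.2.1 p_ker add0r. Qed.

Hypothesis g_kn : k_normal g.

Lemma hom_comp_surjective (P : lSemiModType S) (n : P -> N) :
  (forall y, exists m, g m = y) -> is_linear n ->
  exists l : P -> M, is_linear l /\ g \o l = n.
Proof.
move=> g_onto n_lin; apply: hom_lift_on KK'.1 g_lin _ n_lin _.
  exact: k_normal_injective_on_complement.
move=> x; have [m gm] := g_onto (n x).
by exists (q m); rewrite g_complement_projection.
Qed.

Lemma hom_comp_k_normal (P : lSemiModType S) (h h' : P -> M) :
  is_linear h -> is_linear h' -> g \o h = g \o h' ->
  exists k k', is_linear k /\ is_linear k' /\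
    g \o k = (fun _ => 0) /\ g \o k' = (fun _ => 0) /\
    (fun x => h x + k x) = (fun x => h' x + k' x).
Proof.
move=> h_lin h'_lin e.
have q_eq x : q (h x) = q (h' x).
  apply: k_normal_injective_on_complement => //.
  by rewrite !g_complement_projection; exact: (equal_f e x).
exists (p \o h'), (p \o h).
split; first exact: is_linear_comp p_lin h'_lin.
split; first exact: is_linear_comp p_lin h_lin.
split; first by apply: functional_extensionality => x /=; exact: p_ker.
split; first by apply: functional_extensionality => x /=; exact: p_ker.
apply: functional_extensionality => x /=.
by rewrite -{1}(pq_sum (h x)) -{2}(pq_sum (h' x)) q_eq addrAC [RHS]addrC addrA.
Qed.

End KernelComplement.

Theorem mainTheorem9 (S : nzSemiRingType) (M : lSemiModType S) :
  (forall K : M -> Prop, subsemimodule K -> subtractive K -> direct_summand K) ->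
  forall P : lSemiModType S, e_projective M P.
Proof.
move=> summand P L N f g [f_lin [g_lin [f_inj [f_im [g_onto g_knormal]]]]].
have g_kn : k_normal g.
  by move=> m m' /(g_knormal m m' I I) [k [k' [_ [_ e]]]]; exists k, k'.
have [K' KK'] :=
  summand _ (kernel_subsemimodule g_lin) (kernel_subtractive g_lin).
have [p [q [p_lin [p_ker [qK' pq_sum]]]]] :=
  direct_complement_projection (kernel_subsemimodule g_lin) KK'.
split; [|split; [|split]].
- move=> h1 h2 _ _ e; apply: functional_extensionality => x.
  by apply: f_inj => //; exact: (equal_f e x).
- move=> h h_lin; apply: hom_image_eq_kernel => // [x y|m].
    exact: f_inj.
  rewrite -(f_im m I); split=> [[l fl] | [l [_ fl]]]; by exists l.
- move=> n n_lin.
  have g_onto' y : exists m, g m = y by have [m [_ gm]] := g_onto y I; exists m.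
  have [l [l_lin gl]] :=
    hom_comp_surjective g_lin KK' p_ker qK' pq_sum g_kn g_onto' n_lin.
  by exists l.
- move=> h h' h_lin h'_lin.
  move/(hom_comp_k_normal g_lin KK' p_lin p_ker qK' pq_sum g_kn h_lin h'_lin).
  by move=> [k [k' spec]]; exists k, k'.
Qed.
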